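(* Let $\mathcal{H}$ be a directed hypergraph on $\{1,2,3\}$ all of whose hyperedges $e$ have order $3$ and satisfy $T(e)\cap H(e)=\emptyset$ (so $\mathcal{E}\subseteq\{(\{2,3\},\{1\}),(\{1,3\},\{2\}),(\{1,2\},\{3\})\}$), and consider a network dynamical system on $\mathcal{H}$ with smooth $F$ and coupling homogeneous in each order. Then its vector field is not equal to the Guckenheimer--Holmes vector field $$\dot x_1 = x_1 + a x_1^3 + b x_1x_2^2 + c x_1x_3^2,\quad \dot x_2 = x_2 + a x_2^3 + b x_2x_3^2 + c x_1^2x_2,\quad \dot x_3 = x_3 + a x_3^3 + b x_1^2x_3 + c x_2^2x_3$$ for any real $a,b,c$ with $b\ne c$; in particular the Guckenheimer--Holmes system with $a+b+c=-1$, $-\tfrac13<a<0$, $c<a<b<0$ cannot be realized.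
   Context: A directed hypergraph on $\mathcal{V}=\{1,\dots,N\}$ is a set $\mathcal{E}$ of hyperedges $e=(T(e),H(e))$ with nonempty tail and head; the order of $e$ is $|T(e)|+1$. A network dynamical system on it is $\dot x_k = F(x_k) + \sum_{e\in\mathcal{E}:\,k\in H(e)} G_e(x_k; x_{T(e)})$ on $\mathbb{R}^N$, with $F$ smooth and each $G_e:\mathbb{R}\times\mathbb{R}^{|T(e)|}\to\mathbb{R}$ smooth, invariant under permutations of its tail arguments and depending nontrivially on them. The coupling is homogeneous in each order if $G_e=G^{(m)}$ for all hyperedges $e$ of order $m$. *)

From Stdlib Require Import Reals List.
From Coquelicot Require Import Coquelicot.
Open Scope R_scope.

(** Smoothness of a real function of one variable: derivatives of all
    orders exist everywhere (hence are all continuous, i.e. C^infinity). *)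
Definition smooth1 (F : R -> R) : Prop :=
  forall (n : nat) (x : R), ex_derive (Derive_n F n) x.

(** Functions R x R^2 -> R are curried as R -> R -> R -> R
    (first argument: the head state x_k; last two: the tail states). *)
Definition fun3 := R -> R -> R -> R.

(** Partial derivative of g along coordinate i (0, 1, or >= 2 meaning the third). *)
Definition pd (i : nat) (g : fun3) : fun3 :=
  match i with
  | O => fun a b c => Derive (fun t => g t b c) a
  | S O => fun a b c => Derive (fun t => g a t c) b
  | _ => fun a b c => Derive (fun t => g a b t) c
  end.

Fixpoint pds (l : list nat) (g : fun3) : fun3 :=
  match l with
  | nil => g
  | i :: l' => pd i (pds l' g)
  end.

Definition smooth3 (g : fun3) : Prop :=
  forall l : list nat,
    (forall a b c,
        ex_derive (fun t => pds l g t b c) a /\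
        ex_derive (fun t => pds l g a t c) b /\
        ex_derive (fun t => pds l g a b t) c) /\
    (forall p : R * R * R,
        continuous (fun q : R * R * R => pds l g (fst (fst q)) (snd (fst q)) (snd q)) p).

Definition tail_symmetric (G : fun3) : Prop :=
  forall x y z, G x y z = G x z y.

Definition depends_on_tail (G : fun3) : Prop :=
  exists x y z y' z', G x y z <> G x y' z'.

(** Network vector field on a directed hypergraph on {1,2,3} whose hyperedges
    all have order 3 with T(e) ∩ H(e) = ∅, i.e. E ⊆ {e1, e2, e3} with
      e1 = ({2,3},{1}), e2 = ({1,3},{2}), e3 = ({1,2},{3}).
    The boolean s_i records whether e_i ∈ E.  Homogeneous coupling in order 3:
    every hyperedge uses the same G = G^(3) : R × R^2 -> R.
    x_k' = F(x_k) + sum_{e ∈ E, k ∈ H(e)} G(x_k; x_{T(e)}). *)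
Definition net_vf (s1 s2 s3 : bool) (F : R -> R) (G : fun3)
  (x1 x2 x3 : R) : R * R * R :=
  (F x1 + (if s1 then G x1 x2 x3 else 0),
   F x2 + (if s2 then G x2 x1 x3 else 0),
   F x3 + (if s3 then G x3 x1 x2 else 0)).

Definition gh_vf (a b c x1 x2 x3 : R) : R * R * R :=
  (x1 + a * x1 ^ 3 + b * x1 * x2 ^ 2 + c * x1 * x3 ^ 2,
   x2 + a * x2 ^ 3 + b * x2 * x3 ^ 2 + c * x1 ^ 2 * x2,
   x3 + a * x3 ^ 3 + b * x1 ^ 2 * x3 + c * x2 ^ 2 * x3).

(** We compare the first two
    components with those of the Guckenheimer–Holmes field:
    - if node 1 (resp. node 2) receives no hyperedge, its component depends on
      x_1 (resp. x_2) alone, while the Guckenheimer–Holmes component contains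
      the terms b x_1 x_2^2 + c x_1 x_3^2 (resp. b x_2 x_3^2 + c x_1^2 x_2);
      hence b = c = 0;
    - if both nodes receive their hyperedge, then at the state (1, 1, 0) the
      network components of nodes 1 and 2 coincide (both equal F(1) + G(1;1,0)),
      whereas the Guckenheimer–Holmes components equal 1 + a + b and 1 + a + c;
      hence b = c. *)

From Stdlib Require Import Reals Lra.
From Coquelicot Require Import Coquelicot.
Open Scope R_scope.

Definition gh1 (a b c x1 x2 x3 : R) : R := fst (fst (gh_vf a b c x1 x2 x3)).
Definition gh2 (a b c x1 x2 x3 : R) : R := snd (fst (gh_vf a b c x1 x2 x3)).

Lemma gh1_autonomous_coeffs (a b c : R) :
  (exists f : R -> R, forall x1 x2 x3, f x1 = gh1 a b c x1 x2 x3) ->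
  b = 0 /\ c = 0.
Proof.
  intros [f Hf].
  pose proof (Hf 1 0 0) as H00; pose proof (Hf 1 1 0) as H10;
    pose proof (Hf 1 0 1) as H01.
  unfold gh1, gh_vf in *; simpl in *; lra.
Qed.

Lemma gh2_autonomous_coeffs (a b c : R) :
  (exists f : R -> R, forall x1 x2 x3, f x2 = gh2 a b c x1 x2 x3) ->
  b = 0 /\ c = 0.
Proof.
  intros [f Hf].
  pose proof (Hf 0 1 0) as H00; pose proof (Hf 0 1 1) as H01;
    pose proof (Hf 1 1 0) as H10.
  unfold gh2, gh_vf in *; simpl in *; lra.
Qed.

(** When nodes 1 and 2 both receive a hyperedge with the same coupling G, their
    components agree at (1, 1, 0); matching the Guckenheimer–Holmes field
    there forces b = c. *)
Lemma coupled_nodes_coeffs (F : R -> R) (G : fun3) (a b c : R) :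
  (forall x1 x2 x3, F x1 + G x1 x2 x3 = gh1 a b c x1 x2 x3) ->
  (forall x1 x2 x3, F x2 + G x2 x1 x3 = gh2 a b c x1 x2 x3) ->
  b = c.
Proof.
  intros H1 H2.
  pose proof (H1 1 1 0) as E1; pose proof (H2 1 1 0) as E2.
  unfold gh1, gh2, gh_vf in *; simpl in *; lra.
Qed.

Theorem mainTheorem5 :
  forall (s1 s2 s3 : bool) (F : R -> R) (G : R -> R -> R -> R),
    smooth1 F -> smooth3 G -> tail_symmetric G -> depends_on_tail G ->
    forall a b c : R, b <> c ->
      ~ (forall x1 x2 x3 : R, net_vf s1 s2 s3 F G x1 x2 x3 = gh_vf a b c x1 x2 x3).
Proof.
  intros s1 s2 s3 F G _ _ _ _ a b c Hbc Heq.
  assert (Node1 : forall x1 x2 x3,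
             F x1 + (if s1 then G x1 x2 x3 else 0) = gh1 a b c x1 x2 x3)
    by (intros; exact (f_equal (fun p => fst (fst p)) (Heq x1 x2 x3))).
  assert (Node2 : forall x1 x2 x3,
             F x2 + (if s2 then G x2 x1 x3 else 0) = gh2 a b c x1 x2 x3)
    by (intros; exact (f_equal (fun p => snd (fst p)) (Heq x1 x2 x3))).
  apply Hbc; destruct s1; [destruct s2 |].
  -
    exact (coupled_nodes_coeffs F G a b c Node1 Node2).
  -
    destruct (gh2_autonomous_coeffs a b c) as [-> ->]; [| reflexivity].
    exists F; intros x1 x2 x3; rewrite <- Node2; ring.
  -
    destruct (gh1_autonomous_coeffs a b c) as [-> ->]; [| reflexivity].
    exists F; intros x1 x2 x3; rewrite <- Node1; ring.
Qed.
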